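(* Let $\mathcal{H}\subseteq\{0,1\}^{\mathcal{X}}$ with $|\mathcal{H}|>2$. For any learning algorithm $\hat h_n$ there exists a realizable distribution $P$ such that $\mathbf{E}[\mathrm{er}_P(\hat h_n)]\ge 2^{-n-2}$ for infinitely many $n$. In particular, $\mathcal{H}$ is not learnable at rate faster than $e^{-n}$.
   Context: $\mathrm{er}_P(h)=P\{(x,y):h(x)\ne y\}$ for a distribution $P$ on $\mathcal{X}\times\{0,1\}$; $P$ is realizable if $\inf_{h\in\mathcal{H}}\mathrm{er}_P(h)=0$. A learning algorithm is a sequence of (universally measurable) maps $H_n:(\mathcal{X}\times\{0,1\})^n\times\mathcal{X}\to\{0,1\}$ with $\hat h_n(x)=H_n((X_1,Y_1),\ldots,(X_n,Y_n),x)$ for i.i.d. $(X_i,Y_i)\sim P$. ''Not learnable at rate faster than $R$'' means that for every learning algorithm there exist a realizable $P$ and $C,c>0$ with $\mathbf{E}[\mathrm{er}_P(\hat h_n)]\ge CR(cn)$ for infinitely many $n$. *)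

From HB Require Import structures.
From mathcomp Require Import all_boot all_order all_algebra.
From mathcomp Require Import all_classical all_reals all_analysis.
Set Implicit Arguments.
Unset Strict Implicit.
Unset Printing Implicit Defensive.
Import Order.TTheory GRing.Theory Num.Theory.
Local Open Scope classical_set_scope.
Local Open Scope ring_scope.
Local Open Scope ereal_scope.

(* Universal measurability: f^-1(B) lies in the mu-completion of the
   sigma-algebra of T for every probability measure mu on T and every
   measurable B. *)
Definition universally_measurable (R : realType) (d1 d2 : measure_display)
  (T : measurableType d1) (U : measurableType d2) (f : T -> U) : Prop :=
  forall (mu : probability T R) (B : set U), measurable B ->
    exists A1 A2 : set T, [/\ measurable A1, measurable A2,
      A1 `<=` f @^-1` B, f @^-1` B `<=` A2 & mu (A2 `\` A1) = 0].

Definition learning_algorithm (R : realType) (d : measure_display)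
  (X : measurableType d) (A : forall n : nat, n.-tuple (X * bool)%type -> X -> bool)
  : Prop :=
  forall n : nat,
    @universally_measurable R _ _ (n.-tuple (X * bool)%type * X)%type bool
      (fun p => A n p.1 p.2).

(* er_P(h) = P{(x,y) : h x <> y}, written as the integral of the indicator
   (coincides with P of that set whenever it is measurable, and with the
   completed measure when it is P-completion measurable). *)
Definition er (R : realType) (d : measure_display) (X : measurableType d)
  (P : probability (X * bool)%type R) (h : X -> bool) : \bar R :=
  \int[P]_z ((h z.1 != z.2)%:R)%:E.

Definition realizable (R : realType) (d : measure_display) (X : measurableType d)
  (H : set (X -> bool)) (P : probability (X * bool)%type R) : Prop :=
  ereal_inf [set er P h | h in H] = 0.

(* Expectation of f(Z_1,...,Z_n) for Z_i i.i.d. ~ P, i.e. the integral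
   against the n-fold product P^n, written as an iterated integral. *)
Fixpoint iid_expect (R : realType) (d : measure_display) (T : measurableType d)
  (P : probability T R) (n : nat) : (n.-tuple T -> \bar R) -> \bar R :=
  match n return (n.-tuple T -> \bar R) -> \bar R with
  | 0 => fun f => f [tuple]
  | m.+1 => fun f => \int[P]_z iid_expect P (fun t : m.-tuple T => f [tuple of z :: t])
  end.

Definition expected_error (R : realType) (d : measure_display) (X : measurableType d)
  (A : forall n : nat, n.-tuple (X * bool)%type -> X -> bool)
  (P : probability (X * bool)%type R) (n : nat) : \bar R :=
  iid_expect P (fun S : n.-tuple (X * bool)%type => er P (A n S)).

Definition not_learnable_faster_than (R : realType) (d : measure_display)
  (X : measurableType d) (H : set (X -> bool)) (Rt : R -> R) : Prop :=
  forall A : forall n : nat, n.-tuple (X * bool)%type -> X -> bool,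
    learning_algorithm R A ->
    exists P : probability (X * bool)%type R, realizable H P /\
    exists C c : R, [/\ (0 < C)%R, (0 < c)%R &
      forall N : nat, exists2 n : nat, (N <= n)%N &
        (C * Rt (c * n%:R))%:E <= expected_error A P n].

From HB Require Import structures.
From mathcomp Require Import all_boot all_order all_algebra.
From mathcomp Require Import all_classical all_reals all_analysis.
From mathcomp Require Import measurable_realfun.
Import Order.TTheory GRing.Theory Num.Theory.
Local Open Scope classical_set_scope.
Local Open Scope ring_scope.
Local Open Scope ereal_scope.

(* Among three distinct classifiers, two agree at some point x (label y) and
   disagree at some x'.  Given an algorithm, pick b such that the algorithm
   trained on n copies of (x, y) predicts ~~ b at x' for infinitely many n,
   and let P be uniform on {(x, y), (x', b)}; P is realizable by the class.
   For such an n, universal measurability of the algorithm yields a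
   measurable set of samples around the constant sample (x, y)^n on which
   x' is still mislabelled; under P^n it has probability >= 2^-n, and on it
   the error is >= P{(x', b)} = 1/2.  Hence E[er_P] >= 2^-(n+1). *)

(* Integral bounds that need no measurability of the integrand: the
   integrand of an expected error (a learned classifier evaluated on random
   samples) is not known to be measurable, so only the supremum-of-simple-
   functions definition of the nonnegative integral can be used. *)
Section integral_bounds.
Context {d : measure_display} {T : measurableType d} {R : realType}.
Variable mu : {measure set T -> \bar R}.

Lemma le_integral_ge0 (f g : T -> \bar R) :
  (forall x, 0 <= g x) -> (forall x, g x <= f x) ->
  \int[mu]_x g x <= \int[mu]_x f x.
Proof.
move=> g0 gf.
have f0 x : 0 <= f x by exact: le_trans (g0 x) (gf x).
rewrite (ge0_integralTE _ g0) (ge0_integralTE _ f0).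
apply: ereal_sup_le => _ [h /= hg <-]; exists h => //= x.
exact: le_trans (hg x) (gf x).
Qed.

Lemma measure_le_integral (f : T -> \bar R) (Z : set T) (k : R) :
  measurable Z -> (0 <= k)%R -> (forall x, 0 <= f x) ->
  (forall x, Z x -> k%:E <= f x) -> k%:E * mu Z <= \int[mu]_x f x.
Proof.
move=> mZ k0 f0 fZ.
have -> : k%:E * mu Z = \int[mu]_x (k%:E * (\1_Z x)%:E).
  rewrite ge0_integralZl_EFin //; first by rewrite integral_indic // setIT.
  by apply/measurable_EFinP; exact: measurable_indic.
apply: le_integral_ge0 => x; rewrite indicE.
  by apply: mule_ge0; rewrite lee_fin.
by case: (boolP (x \in Z)) => [/set_mem /fZ|_]; rewrite ?mule1 ?mule0.
Qed.

End integral_bounds.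

Section tuple_sections.
Context {d : measure_display} {T : measurableType d} {n : nat}.
Context {G : set ((n.+1).-tuple T)}.
Hypothesis mG : measurable G.

Lemma measurable_cons_head (t : n.-tuple T) :
  measurable [set z | G [tuple of z :: t]].
Proof.
have mc : measurable_fun [set: T] (fun z => [tuple of z :: t]).
  by apply: measurable_cons => //; exact: measurable_cst.
by have := mc measurableT G mG; rewrite setTI.
Qed.

Lemma measurable_cons_tail (z : T) :
  measurable [set t : n.-tuple T | G [tuple of z :: t]].
Proof.
have mc : measurable_fun [set: n.-tuple T] (fun t => [tuple of z :: t]).
  by apply: measurable_cons => //; exact: measurable_cst.
by have := mc measurableT G mG; rewrite setTI.
Qed.

End tuple_sections.

Section iid_bounds.
Context {R : realType} {d : measure_display} {T : measurableType d}.
Variable P : probability T R.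

Lemma iid_expect_ge0 n (f : n.-tuple T -> \bar R) :
  (forall t, 0 <= f t) -> 0 <= iid_expect P f.
Proof.
elim: n f => [|n IH] f f0 /=; first exact: f0.
by apply: integral_ge0 => z _; apply: IH => t; exact: f0.
Qed.

(* If P charges every measurable neighbourhood of the point a with mass at
   least p, and f >= c on a measurable set of samples containing the
   constant sample (a, ..., a), then the i.i.d. expectation of f is at least
   c p^n: with probability >= p^n every sample point falls near a. *)
Lemma iid_expect_atom_lb (a : T) (p : R) :
  (0 <= p)%R -> (forall Z, measurable Z -> Z a -> p%:E <= P Z) ->
  forall n (f : n.-tuple T -> \bar R) (G : set (n.-tuple T)) (c : R),
  (0 <= c)%R -> measurable G -> G (nseq_tuple n a) -> (forall t, 0 <= f t) ->
  (forall t, G t -> c%:E <= f t) -> (c * p ^+ n)%:E <= iid_expect P f.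
Proof.
move=> p0 hP; elim=> [|n IH] f G c c0 mG Ga f0 fG /=.
  by rewrite expr0 mulr1; apply: fG; rewrite -(tuple0 (nseq_tuple 0 a)).
set Z := [set z | G [tuple of z :: nseq_tuple n a]].
have Za : Z a.
  by rewrite /Z /= (_ : [tuple of a :: _] = nseq_tuple n.+1 a) //; exact: val_inj.
have mZ : measurable Z := measurable_cons_head mG _.
have cp0 : (0 <= c * p ^+ n)%R by rewrite mulr_ge0 // exprn_ge0.
apply: le_trans (measure_le_integral P _ _ _ mZ cp0 _ _).
- rewrite exprSr mulrA EFinM; apply: lee_wpmul2l; first by rewrite lee_fin.
  exact: hP.
- by move=> z; apply: iid_expect_ge0.
- move=> z Zz; apply: (IH _ _ c c0 (measurable_cons_tail mG z) Zz) => //.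
  by move=> t; apply: fG.
Qed.

End iid_bounds.

Lemma mnormalizeE {R : realType} {d : measure_display} {T : measurableType d}
    (mu : {measure set T -> \bar R}) (P : probability T R) (r : R) (V : set T) :
  (0 < r)%R -> mu setT = r%:E -> mnormalize mu P V = mu V * (r^-1)%:E.
Proof. by move=> r0 mu1; rewrite /mnormalize mu1 eqe gt_eqF. Qed.

Definition two_point (R : realType) d (T : measurableType d) (a c : T)
    : probability T R :=
  mnormalize (measure_add (@dirac _ T a R) (@dirac _ T c R)) (@dirac _ T a R).
Arguments two_point R {d T}.

Section two_point.
Context (R : realType) {d : measure_display} {T : measurableType d} (a c : T).

Lemma two_pointE U :
  two_point R a c U = ((a \in U)%:R + (c \in U)%:R)%:E * (2^-1)%:E.
Proof.
apply: eq_trans (mnormalizeE _ _ 2%R U _ _) _ => //.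
  by apply: eq_trans (measure_addE _ _ _) _; rewrite /= !diracE !in_setT.
by congr (_ * _); apply: eq_trans (measure_addE _ _ _) _; rewrite /= !diracE.
Qed.

Lemma two_point_ge U : U a \/ U c -> (2^-1)%:E <= two_point R a c U.
Proof.
move=> h; rewrite two_pointE -EFinM lee_fin ler_peMl //.
by case: h => /mem_set ->; [rewrite lerDl | rewrite lerDr].
Qed.

Lemma two_point_null U : ~ U a -> ~ U c -> two_point R a c U = 0.
Proof. by move=> ha hc; rewrite two_pointE !memNset //= addr0 mul0e. Qed.

End two_point.

(* A universally measurable map is approximated from inside by measurable
   sets at every point: completing with respect to the Dirac mass at p
   leaves a measurable subset of f^-1(B) that still contains p. *)
Lemma universally_measurable_inner (R : realType) d1 d2 (T : measurableType d1)
    (U : measurableType d2) (f : T -> U) (B : set U) (p : T) :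
  universally_measurable R f -> measurable B -> B (f p) ->
  exists2 A, measurable A & A p /\ A `<=` f @^-1` B.
Proof.
move=> fum mB Bfp.
have [A1 [A2 [mA1 _ A1B BA2 null]]] := fum (@dirac _ _ p R) B mB.
exists A1 => //; split => //; apply: contrapT => A1p.
have A2A1p : (A2 `\` A1) p by split => //; exact: BA2.
by move: null; rewrite /= diracE mem_set //= => /eqP; rewrite eqe oner_eq0.
Qed.

Lemma frequently_ne_bool (v : nat -> bool) :
  exists b, forall N, exists2 n, (N <= n)%N & v n != b.
Proof.
have [inf_false|fin_false] :=
  pselect (forall N, exists2 n, (N <= n)%N & v n = false).
  by exists true => N; have [n Nn vn] := inf_false N; exists n => //; rewrite vn.
exists false => N; apply: contrapT => no_true; apply: fin_false => M.
exists (maxn M N); first exact: leq_maxl.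
apply/negbTE/negP => vT; apply: no_true; exists (maxn M N); last by rewrite vT.
exact: leq_maxr.
Qed.

(* A class of at least three classifiers contains two that agree at some
   point x and disagree at some point x'; hence both labellings (y, b) of
   (x, x') with the common label y are realized within the class. *)
Lemma three_classifiers_realize {X : Type} {H : set (X -> bool)} :
  (exists h1 h2 h3, [/\ H h1, H h2, H h3 & [/\ h1 <> h2, h1 <> h3 & h2 <> h3]]) ->
  exists x y x', forall b, exists2 h, H h & h x = y /\ h x' = b.
Proof.
move=> [h1 [h2 [h3 [H1 H2 H3 [n12 n13 n23]]]]].
have neq_at (f g : X -> bool) : f <> g -> exists x, f x != g x.
  move=> fg; apply: contrapT => eq_all; apply: fg; apply: funext => x.
  by apply: contrapT => fgx; apply: eq_all; exists x; apply/eqP.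
have realize (f g : X -> bool) : H f -> H g -> f <> g ->
    (exists x, f x = g x) -> exists x y x', forall b, exists2 h, H h & h x = y /\ h x' = b.
  move=> Hf Hg fg [x fgx]; have [x' fgx'] := neq_at f g fg.
  exists x, (f x), x' => b; case: (eqVneq (f x') b) => [fb|fNb].
    by exists f.
  exists g => //; split; first by rewrite fgx.
  by move: fgx' fNb; case: (f x'); case: (g x'); case: b.
have [agree12|disagree12] := pselect (exists x, h1 x = h2 x); first exact: (realize h1 h2).
have [agree13|disagree13] := pselect (exists x, h1 x = h3 x); first exact: (realize h1 h3).
exfalso; apply: n23; apply: funext => x.
have n2 : h1 x != h2 x by apply/eqP => e; apply: disagree12; exists x.
have n3 : h1 x != h3 x by apply/eqP => e; apply: disagree13; exists x.
by move: n2 n3; case: (h1 x); case: (h2 x); case: (h3 x).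
Qed.

Section classification_error.
Context {R : realType} {d : measure_display} {X : measurableType d}.
Variable P : probability (X * bool)%type R.

Definition error_set (h : X -> bool) : set (X * bool) := [set z | h z.1 != z.2].

(* A measurable classifier has a measurable error set: it is the union of
   the two "predicted one label, labelled the other" rectangles. *)
Lemma measurable_error_set (h : X -> bool) :
  measurable_fun [set: X] h -> measurable (error_set h).
Proof.
move=> mh.
have mlabel v : measurable [set z : X * bool | h z.1 = v].
  have := (measurableT_comp mh (@measurable_fst _ _ X bool)) measurableT [set v] I.
  by rewrite setTI.
have mtarget v : measurable [set z : X * bool | z.2 = v].
  have := (@measurable_snd _ _ X bool) measurableT [set v] I.
  by rewrite setTI.
have -> : error_set h = ([set z | h z.1 = true] `&` [set z | z.2 = false]) `|`
                        ([set z | h z.1 = false] `&` [set z | z.2 = true]).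
  by apply/seteqP; split => -[u w] /=; rewrite /error_set /=;
    case: (h u); case: w => //=; by [left | right | move=> [[]|[]]].
by apply: measurableU; apply: measurableI.
Qed.

Lemma er_ge0 (h : X -> bool) : 0 <= er P h.
Proof. by apply: integral_ge0 => z _; rewrite lee_fin. Qed.

Lemma erE (h : X -> bool) : measurable_fun [set: X] h -> er P h = P (error_set h).
Proof.
move=> mh; rewrite /er -[error_set h]setIT -integral_indic //; last exact: measurable_error_set.
apply: eq_integral => z _; rewrite indicE.
by case: (boolP (h z.1 != z.2)) => e; [rewrite mem_set | rewrite memNset //; exact/negP].
Qed.

(* Any measurable part of the error set bounds the error from below, even
   when the classifier itself is not measurable. *)
Lemma measure_le_er (h : X -> bool) (K : set (X * bool)) :
  measurable K -> K `<=` error_set h -> P K <= er P h.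
Proof.
move=> mK Kerr; rewrite -[P K]mul1e.
by apply: measure_le_integral => // z /Kerr; rewrite /error_set /= => ->.
Qed.

Lemma realizable_of_null_error {H : set (X -> bool)} {h : X -> bool} :
  H h -> er P h = 0 -> realizable H P.
Proof.
move=> Hh er0; apply/eqP; rewrite eq_le; apply/andP; split.
  by rewrite -er0; apply: ereal_inf_lbound; exists h.
by apply: le_ereal_inf_tmp => _ [g _ <-]; exact: er_ge0.
Qed.

End classification_error.

(* By universal measurability the same misprediction persists on a
   measurable set of samples around (a, ..., a), of probability >= p^n, and
   on each such sample the error is >= q; so E[er_P] >= q p^n. *)
Lemma expected_error_atom_lb {R : realType} {d : measure_display}
    {X : measurableType d} {A : forall n, n.-tuple (X * bool)%type -> X -> bool}
    {P : probability (X * bool)%type R} {a : X * bool} {x' : X} {b : bool}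
    {p q : R} {n : nat} :
  learning_algorithm R A -> (0 <= p)%R -> (0 <= q)%R ->
  (forall Z, measurable Z -> Z a -> p%:E <= P Z) ->
  (forall Z, measurable Z -> Z (x', b) -> q%:E <= P Z) ->
  A n (nseq_tuple n a) x' != b -> (q * p ^+ n)%:E <= expected_error A P n.
Proof.
move=> hA p0 q0 Pa Pb mistake.
have predicts_Nb : A n (nseq_tuple n a) x' = ~~ b.
  by move: mistake; case: (A n _ x'); case: (b).
have [A1 mA1 [A1a A1mistake]] := @universally_measurable_inner R _ _ _ _ _
  [set ~~ b] (nseq_tuple n a, x') (hA n) I predicts_Nb.
pose G := [set S | A1 (S, x')].
have mG : measurable G.
  by have := (@pair2_measurable _ _ _ _ x') measurableT A1 mA1; rewrite setTI.
apply: (iid_expect_atom_lb P a p p0 Pa n _ G q q0 mG A1a) => [S|S GS]; first exact: er_ge0.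
pose K := [set z | A1 (S, z.1) /\ z.2 = b].
have mK : measurable K.
  have -> : K = ((fun z : X * bool => (S, z.1)) @^-1` A1) `&` (snd @^-1` [set b]).
    by apply/seteqP; split => z.
  apply: measurableI.
    have := (measurableT_comp (@pair1_measurable _ _ _ _ S)
               (@measurable_fst _ _ X bool)) measurableT A1 mA1.
    by rewrite setTI.
  by have := (@measurable_snd _ _ X bool) measurableT [set b] I; rewrite setTI.
apply: le_trans (Pb K mK _) (measure_le_er P _ _ mK _); first by split.
move=> z [/A1mistake]; rewrite /preimage /error_set /= => -> ->.
by case: (b).
Qed.

Lemma exponential_lower_bound (R : realType) {d : measure_display}
    {X : measurableType d} {H : set (X -> bool)} :
  (forall h, H h -> measurable_fun [set: X] h) ->
  (exists h1 h2 h3, [/\ H h1, H h2, H h3 & [/\ h1 <> h2, h1 <> h3 & h2 <> h3]]) ->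
  forall A : forall n : nat, n.-tuple (X * bool)%type -> X -> bool,
    learning_algorithm R A ->
    exists P : probability (X * bool)%type R, realizable H P /\
      forall N : nat, exists2 n : nat, (N <= n)%N &
        ((2%:R : R) ^- n.+2)%:E <= expected_error A P n.
Proof.
move=> H_meas H_card A hA.
have [x [y [x' realized]]] := three_classifiers_realize H_card.
have [b often] := frequently_ne_bool (fun n => A n (nseq_tuple n (x, y)) x').
pose P := two_point R (x, y) (x', b).
exists P; split.
  have [h Hh [hx hx']] := realized b.
  apply: (realizable_of_null_error P Hh).
  rewrite erE; last exact: H_meas.
  by apply: (two_point_null R); rewrite /error_set /= ?hx ?hx' eqxx.
move=> N; have [n Nn mistake] := often N; exists n => //.
have half Z : measurable Z -> Z (x, y) \/ Z (x', b) -> (2^-1)%:E <= P Z.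
  by move=> _; exact: two_point_ge.
have half_a Z mZ Za := half Z mZ (or_introl Za).
have half_b Z mZ Zb := half Z mZ (or_intror Zb).
apply: le_trans (expected_error_atom_lb hA _ _ half_a half_b mistake) => //.
rewrite lee_fin -exprS exprVn lef_pV2 ?posrE ?exprn_gt0 //.
by rewrite ler_eXn2l // ltr1n.
Qed.

Lemma pow2_as_exp (R : realType) (n : nat) :
  ((2%:R : R) ^- n.+2 = 4^-1 * expR (- (ln 2 * n%:R)))%R.
Proof.
rewrite expRN expRM_natr lnK ?posrE // -invfM.
by rewrite !exprS mulrA -natrM.
Qed.

Theorem mainTheorem7 (R : realType) (d : measure_display) (X : measurableType d)
  (H : set (X -> bool))
  (H_meas : forall h, H h -> measurable_fun [set: X] h)
  (H_card : exists h1 h2 h3, [/\ H h1, H h2, H h3 & [/\ h1 <> h2, h1 <> h3 & h2 <> h3]]) :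
  (forall A : forall n : nat, n.-tuple (X * bool)%type -> X -> bool,
    learning_algorithm R A ->
    exists P : probability (X * bool)%type R, realizable H P /\
      forall N : nat, exists2 n : nat, (N <= n)%N &
        ((2%:R : R) ^- n.+2)%:E <= expected_error A P n)
  /\ not_learnable_faster_than H (fun t : R => expR (- t)).
Proof.
have lower_bound := exponential_lower_bound R H_meas H_card.
split => // A hA.
have [P [realizable_P often]] := lower_bound A hA.
exists P; split => //; exists 4^-1%R, (ln 2); split.
- by rewrite invr_gt0.
- by rewrite ln_gt0 // ltr1n.
- by move=> N; have [n Nn bound] := often N; exists n; rewrite // -pow2_as_exp.
Qed.
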